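(* Let $S$ be a finite virtual flat biquandle, $A$ an abelian group without 2-torsion, $\phi:S\times S\to A$ a 2-cocycle of both $\mathrm{Hom}(C^{VF}_\ast(S),A)$ and $\mathrm{Hom}(C^{SF}_\ast(S),A)$, and $\phi'$ a 2-coboundary of $\mathrm{Hom}(C^{VF}_\ast(S),A)$, i.e. $\phi'(a,b)=\eta(\partial_2(a,b))=-\eta(b)+\eta(b\circ a)+\eta(a\ast b)-\eta(a)$ for some map $\eta:S\to A$. Then $\phi+\phi'$ is a 2-cocycle of $\mathrm{Hom}(C^{SF}_\ast(S),A)$, and $\Phi_\phi(L)=\Phi_{\phi+\phi'}(L)$ for every oriented flat virtual link diagram $L$.
   Context: A virtual flat biquandle is a set $S$ with two binary operations $a\ast b$, $a\circ b$; writing $S_b(a)=a\ast b$, $T_b(a)=a\circ b$, for all $a,b$: $S_aS_b=S_bS_a$, $T_aT_b=T_bT_a$, $S_aT_b=T_bS_a$; $S_a=S_{T_b(a)}=S_{S_b(a)}$, $T_a=T_{S_b(a)}=T_{T_b(a)}$; $T_aS_a=S_aT_a=\mathrm{id}$. Complexes: $C_n(S)$ is free abelian on $n$-tuples of elements of $S$. $C^{VF}_\ast(S)=C_\ast(S)/C'_\ast(S)$ with boundary $\partial_n(a_1,\dots,a_n)=\sum_{i=1}^n(-1)^i((a_1\ast a_i,\dots,a_{i-1}\ast a_i,a_{i+1},\dots,a_n)-(a_1,\dots,a_{i-1},a_{i+1}\circ a_i,\dots,a_n\circ a_i))$ for $n\ge2$ ($\partial_n=0$ for $n\le1$), where $C'_n(S)$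 ($n\ge2$) is generated by $(a_1,\dots,a_i,a_{i+1},\dots,a_n)+(a_1,\dots,a_{i+1}\circ a_i,a_i\ast a_{i+1},\dots,a_n)$ and $C'_n(S)=0$ for $n\le1$. $C^{SF}_\ast(S)=C_\ast(S)$ with boundary $d_n(a_1,\dots,a_n)=\sum_{i=1}^{n-1}(-1)^i((a_1,\dots,\widehat{a_i},\dots,a_n)-(a_1,\dots,\widehat{a_i},\dots,a_{n-1},a_n\circ a_i))$. A map $S\times S\to A$ extended linearly is a 2-cochain; cocycle/coboundary are with respect to the dual coboundary maps. Flat virtual link diagrams have flat crossings (no over/under information) and virtual crossings. A v-arc is a part of the diagram between consecutive virtual crossings. A coloring $\theta$ assigns an element of $S$ to each v-arc such that at each virtual crossing $\tau$, rotated so both strands point downward, if the incoming upper-left v-arc has color $a$ and the incoming upper-right v-arc has color $b$, then the outgoing arc continuing the upper-left strand has color $a\ast b$ and the outgoing arc continuing the upper-right strand has color $b\circ a$; for a map $\psi:S\times S\to A$ the weight of $\tau$ is $\psi(a,b)$. The state-sum is $\Phi_\psi(L)=\sum_\theta\big[\sum_\tau \psi(a_\tau,b_\tau)\big]\in\mathbb{Z}[A]$, where $[x]$ is the group ring basis element of $x\in A$ and the sum is over all colorings. *)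

From mathcomp Require Import all_boot all_order all_algebra all_fingroup.
Set Implicit Arguments. Unset Strict Implicit. Unset Printing Implicit Defensive.
Import GRing.Theory.
Local Open Scope ring_scope.

Section VFB.
Variable S : finType.
Variables (ast circ : S -> S -> S).   (* ast a b = a * b,  circ a b = a o b *)

(* Virtual flat biquandle axioms; S_b(a) = ast a b, T_b(a) = circ a b. *)
Definition is_vfbiquandle : Prop :=
  (forall a b x, ast (ast x b) a = ast (ast x a) b) /\
      (forall a b x, circ (circ x b) a = circ (circ x a) b) /\
      (forall a b x, ast (circ x b) a = circ (ast x a) b) /\
      (forall a b x, ast x a = ast x (circ a b) /\ ast x a = ast x (ast a b)) /\
      (forall a b x, circ x a = circ x (ast a b) /\ circ x a = circ x (circ a b)) /\
    (forall a x, circ (ast x a) a = x /\ ast (circ x a) a = x).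

(* Chains of C_*(S): formal Z-combinations of tuples, as lists (coeff, tuple). *)
Definition chain := seq (int * seq S).

(* boundary of C^VF_*(S):
   partial_n(a_1..a_n) = sum_{i=1}^n (-1)^i ((a_1*a_i,..,a_{i-1}*a_i,a_{i+1},..,a_n)
                                          - (a_1,..,a_{i-1},a_{i+1}oa_i,..,a_n o a_i)),
   and 0 for n <= 1.  Index j = i - 1. *)
Definition bdVF (t : seq S) : chain :=
  match t with
  | [::] => [::]
  | x0 :: _ =>
    if (size t < 2)%N then [::] else
    flatten [seq (let ai := nth x0 t j in
                  let sg : int := (-1) ^+ j.+1 in
                  [:: (sg, map (fun x => ast x ai) (take j t) ++ drop j.+1 t);
                      (- sg, take j t ++ map (fun x => circ x ai) (drop j.+1 t))])
            | j <- iota 0 (size t)]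
  end.

(* boundary of C^SF_*(S):
   d_n(a_1..a_n) = sum_{i=1}^{n-1} (-1)^i ((a_1,..,^a_i,..,a_n)
                                   - (a_1,..,^a_i,..,a_{n-1}, a_n o a_i)). *)
Definition bdSF (t : seq S) : chain :=
  match t with
  | [::] => [::]
  | x0 :: _ =>
    let n := size t in
    let an := last x0 t in
    flatten [seq (let ai := nth x0 t j in
                  let sg : int := (-1) ^+ j.+1 in
                  [:: (sg, take j t ++ drop j.+1 t);
                      (- sg, take j t ++ drop j.+1 (take n.-1 t) ++ [:: circ an ai])])
            | j <- iota 0 n.-1]
  end.

(* Generators of C'_n(S) (n >= 2), for 0 <= j < n-1 (j = i - 1):
   (a_1,..,a_i,a_{i+1},..,a_n) + (a_1,..,a_{i+1} o a_i, a_i * a_{i+1},..,a_n). *)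
Definition genC' (t : seq S) (j : nat) : chain :=
  match t with
  | [::] => [::]
  | x0 :: _ =>
    let ai := nth x0 t j in let ai1 := nth x0 t j.+1 in
    [:: (1%R, t); (1%R, take j t ++ [:: circ ai1 ai; ast ai ai1] ++ drop j.+2 t)]
  end.

Variable A : zmodType.

Definition ceval (f : seq S -> A) (c : chain) : A :=
  \sum_(p <- c) (f p.2 *~ p.1).

Definition ev2 (psi : S -> S -> A) (t : seq S) : A :=
  if t is [:: a; b] then psi a b else 0.

Definition ev1 (eta : S -> A) (t : seq S) : A :=
  if t is [:: a] then eta a else 0.

(* psi is a 2-cocycle of Hom(C^VF_*(S), A): it vanishes on C'_2 (so it is
   a cochain on the quotient) and psi o partial_3 = 0. *)
Definition cocycle2VF (psi : S -> S -> A) : Prop :=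
  (forall t j, size t = 2%N -> (j.+1 < size t)%N -> ceval (ev2 psi) (genC' t j) = 0)
  /\ (forall a1 a2 a3 : S, ceval (ev2 psi) (bdVF [:: a1; a2; a3]) = 0).

Definition cocycle2SF (psi : S -> S -> A) : Prop :=
  forall a1 a2 a3 : S, ceval (ev2 psi) (bdSF [:: a1; a2; a3]) = 0.

Definition coboundary2VF (eta : S -> A) : S -> S -> A :=
  fun a b => ceval (ev1 eta) (bdVF [:: a; b]).

End VFB.

(* Each crossing c, rotated so both strands point downward, has two incoming
   slots (c,false) = upper-left, (c,true) = upper-right, and two outgoing slots:
   (c,false) = the outgoing end of the strand entering at upper-left,
   (c,true)  = the outgoing end of the strand entering at upper-right.
   The arcs (edges between consecutive crossings along the orientation) are
   indexed by their starting outgoing slot; arc e ends at incoming slot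
   [nxt e]; [nxt] is a bijection.  [nloops] counts closed components without
   any crossing. *)
Record fvdiagram := FVDiagram {
  ncross : nat;
  virt : 'I_ncross -> bool;
  nxt : {perm 'I_ncross * bool};
  nloops : nat
}.

Section StateSum.
Variable S : finType.
Variables (ast circ : S -> S -> S).
Variable A : zmodType.
Variable L : fvdiagram.

Definition colouring := ({ffun 'I_(ncross L) * bool -> S} * {ffun 'I_(nloops L) -> S})%type.

Definition incol (th : colouring) (c : 'I_(ncross L)) (s : bool) : S :=
  th.1 ((nxt L)^-1%g (c, s)).

(* At a flat crossing the v-arcs pass straight through
   (a v-arc only ends at virtual crossings), so colours are unchanged. *)
Definition is_colouring (th : colouring) : bool :=
  [forall c : 'I_(ncross L),
     let a := incol th c false in let b := incol th c true in
     if @virt L c then (th.1 (c, false) == ast a b) && (th.1 (c, true) == circ b a)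
     else (th.1 (c, false) == a) && (th.1 (c, true) == b)].

Definition cweight (psi : S -> S -> A) (th : colouring) : A :=
  \sum_(c : 'I_(ncross L) | @virt L c) psi (incol th c false) (incol th c true).

(* The state-sum Phi_psi(L) = sum_theta [weight theta] in Z[A], represented by
   its coefficient function A -> nat: the coefficient of the basis element [x]
   is the number of colourings of weight x. *)
Definition statesum (psi : S -> S -> A) : A -> nat :=
  fun x => #|[set th : colouring | is_colouring th && (cweight psi th == x)]|.

End StateSum.

(** The coboundary [eta o partial_2] evaluated at a virtual crossing is the
    difference between the [eta]-values of the two outgoing and the two
    incoming v-arcs, and it vanishes at flat crossings, where colours pass
    through unchanged.  Summed over all crossings of a coloured diagram these
    differences telescope, since every arc is outgoing at exactly one crossing
    and incoming at exactly one; so adding the coboundary does not change the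
    weight of any colouring.  That it is a cocycle of [C^SF] follows from the
    commutation [T_a T_b = T_b T_a] and the invariance [S_a = S_{T_b a}]. *)

From mathcomp Require Import all_boot all_order all_algebra all_fingroup.
From Stdlib Require Import FunctionalExtensionality.
Import GRing.Theory.
Local Open Scope ring_scope.

Section Cochains.
Variable S : finType.
Variables (ast circ : S -> S -> S).
Variable A : zmodType.

Lemma ceval_ev2D (psi1 psi2 : S -> S -> A) (c : chain S) :
  ceval (ev2 (fun a b => psi1 a b + psi2 a b)) c =
  ceval (ev2 psi1) c + ceval (ev2 psi2) c.
Proof.
rewrite /ceval -big_split /=; apply: eq_bigr => -[z t] _ /=.
by case: t => [|a [|b []]] /=; rewrite ?mul0rz ?addr0 // mulrzDl.
Qed.

Lemma ceval_ev2_bdSF3 (psi : S -> S -> A) (a1 a2 a3 : S) :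
  ceval (ev2 psi) (bdSF circ [:: a1; a2; a3]) =
  - psi a2 a3 + psi a2 (circ a3 a1) + psi a1 a3 - psi a1 (circ a3 a2).
Proof.
rewrite /ceval /bdSF /= !big_cons big_nil /= expr1 sqrrN expr1n opprK.
by rewrite mulrN1z !mulr1z mulrN1z addr0 !addrA.
Qed.

Lemma cocycle2SFD (psi1 psi2 : S -> S -> A) :
  cocycle2SF circ psi1 -> cocycle2SF circ psi2 ->
  cocycle2SF circ (fun a b => psi1 a b + psi2 a b).
Proof. by move=> c1 c2 a1 a2 a3; rewrite ceval_ev2D c1 c2 addr0. Qed.

Variable eta : S -> A.

Lemma coboundary2VFE (a b : S) :
  coboundary2VF ast circ eta a b =
  (eta (ast a b) - eta a) + (eta (circ b a) - eta b).
Proof.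
rewrite /coboundary2VF /ceval /bdVF /= !big_cons big_nil /= expr1 sqrrN expr1n opprK.
rewrite mulrN1z !mulr1z mulrN1z addr0.
by rewrite addrC addrAC addrC.
Qed.

Lemma coboundary2VF_circ_diff (a b c : S) :
  ast a b = ast a (circ b c) ->
  coboundary2VF ast circ eta a (circ b c) - coboundary2VF ast circ eta a b =
  (eta (circ (circ b c) a) - eta (circ b c)) - (eta (circ b a) - eta b).
Proof. by move=> astT; rewrite !coboundary2VFE -astT opprD addrACA subrr add0r. Qed.

Lemma cocycle2SF_coboundary2VF :
  (forall a b x, circ (circ x b) a = circ (circ x a) b) ->
  (forall a b x, ast x a = ast x (circ a b)) ->
  cocycle2SF circ (coboundary2VF ast circ eta).
Proof.
move=> circC astT a1 a2 a3; rewrite ceval_ev2_bdSF3.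
set cob := coboundary2VF ast circ eta.
have -> : - cob a2 a3 + cob a2 (circ a3 a1) + cob a1 a3 - cob a1 (circ a3 a2) =
          (cob a2 (circ a3 a1) - cob a2 a3) - (cob a1 (circ a3 a2) - cob a1 a3).
  by rewrite opprB addrA [- _ + _]addrC.
rewrite !(coboundary2VF_circ_diff _ _ _ (astT _ _ _)) circC.
apply/eqP; rewrite subr_eq0; apply/eqP.
by rewrite !opprB addrACA [RHS]addrACA [- _ - _]addrC.
Qed.

End Cochains.

Section StateSum.
Variable S : finType.
Variables (ast circ : S -> S -> S).
Variable A : zmodType.
Variable L : fvdiagram.
Implicit Types (psi : S -> S -> A) (th : colouring S L).

Lemma cweightD psi1 psi2 th :
  cweight (fun a b => psi1 a b + psi2 a b) th = cweight psi1 th + cweight psi2 th.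
Proof. exact: big_split. Qed.

Lemma statesum_eq psi1 psi2 :
  (forall th, is_colouring ast circ th -> cweight psi1 th = cweight psi2 th) ->
  statesum ast circ L psi1 = statesum ast circ L psi2.
Proof.
move=> eq_w; apply: functional_extensionality => x.
apply: eq_card => th; rewrite !inE.
by case col_th: is_colouring => //=; rewrite eq_w.
Qed.

Lemma sum_incol (f : S -> A) th :
  \sum_c \sum_(s : bool) f (incol th c s) = \sum_c \sum_(s : bool) f (th.1 (c, s)).
Proof.
rewrite !pair_big /= (reindex_inj (@perm_inj _ (nxt L))) /=.
by apply: eq_bigr => p _; rewrite /incol -!surjective_pairing permK.
Qed.

Variable eta : S -> A.

Lemma crossing_coboundary2VF th c :
  is_colouring ast circ th ->
  (if virt c then coboundary2VF ast circ eta (incol th c false) (incol th c true)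
   else 0) =
  \sum_(s : bool) (eta (th.1 (c, s)) - eta (incol th c s)).
Proof.
move=> /forallP /(_ c) /=; rewrite big_bool /=.
case: (virt c) => /andP[/eqP -> /eqP ->]; last by rewrite !subrr addr0.
by rewrite coboundary2VFE addrC.
Qed.

Lemma cweight_coboundary2VF th :
  is_colouring ast circ th -> cweight (coboundary2VF ast circ eta) th = 0.
Proof.
move=> col_th; rewrite /cweight big_mkcond /=.
under eq_bigr => c _ do rewrite crossing_coboundary2VF // sumrB.
by rewrite sumrB sum_incol subrr.
Qed.
End StateSum.

Theorem proposition5p5 (S : finType) (ast circ : S -> S -> S)
  (HS : is_vfbiquandle ast circ)
  (A : zmodType) (HA : forall x : A, x + x = 0 -> x = 0)
  (phi : S -> S -> A)
  (Hphi_VF : cocycle2VF ast circ phi) (Hphi_SF : cocycle2SF circ phi)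
  (eta : S -> A) :
  let phi' := coboundary2VF ast circ eta in
  cocycle2SF circ (fun a b => phi a b + phi' a b) /\
  (forall L : fvdiagram,
     statesum ast circ L phi = statesum ast circ L (fun a b => phi a b + phi' a b)).
Proof.
move=> phi'; have [_ [circC [_ [astT _]]]] := HS.
split.
  apply: cocycle2SFD Hphi_SF _.
  by apply: cocycle2SF_coboundary2VF => // a b x; case: (astT a b x).
move=> L; apply: statesum_eq => th col_th.
by rewrite cweightD cweight_coboundary2VF ?addr0.
Qed.
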